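(* Let $2\le s\le 2^{n-2}$ and let $S=\{\mathbf{v}_1,\dots,\mathbf{v}_s\}\subseteq\mathbb{F}_2^n$ be a set of $s$ distinct nonzero vectors with $\dim S\ge2$. Then for any nonnegative integers $b_1,\dots,b_s$ with $\sum_{j=1}^s b_j=2^{\dim S-2}$, the graph $G_S$ has an independent set $A$ of size $2^{\dim S-2}$ with $|A\cap V_j|=b_j$ for every $j\in[s]$.
   Context: For $S=\{\mathbf{v}_1,\dots,\mathbf{v}_s\}\subseteq\mathbb{F}_2^n$ a set of distinct nonzero vectors, $\langle S\rangle$ is its span and $\dim S=\dim\langle S\rangle$. The $s$-partite graph $G_S$ has vertex set $V_1\sqcup\dots\sqcup V_s$ (disjoint union), where $V_j=\{\{\mathbf{x},\mathbf{x}+\mathbf{v}_j\}:\mathbf{x}\in\langle S\rangle\}$ is the set of cosets of $\langle\mathbf{v}_j\rangle$ in $\langle S\rangle$ (so $|V_j|=2^{\dim S-1}$); there are no edges inside any $V_j$, and for $j_1\ne j_2$ a vertex $\{\mathbf{x}_1,\mathbf{x}_1+\mathbf{v}_{j_1}\}\in V_{j_1}$ is adjacent to $\{\mathbf{x}_2,\mathbf{x}_2+\mathbf{v}_{j_2}\}\in V_{j_2}$ iff these two sets intersect. *)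

From HB Require Import structures.
From mathcomp Require Import all_boot all_order all_algebra.
Set Implicit Arguments. Unset Strict Implicit. Unset Printing Implicit Defensive.
Import GRing.Theory.
Local Open Scope ring_scope.

(* Vectors of F_2^n are row vectors 'rV['F_2]_n.  A family S = {v_1,...,v_s}
   is given as v : 'I_s -> 'rV['F_2]_n (injective, nonzero values). *)

Definition vecmx (n s : nat) (v : 'I_s -> 'rV['F_2]_n) : 'M['F_2]_(s, n) :=
  \matrix_(i < s) v i.

Definition spanS (n s : nat) (v : 'I_s -> 'rV['F_2]_n) : {set 'rV['F_2]_n} :=
  [set x | (x <= vecmx v)%MS].

Definition dimS (n s : nat) (v : 'I_s -> 'rV['F_2]_n) : nat := \rank (vecmx v).

(* vertices of G_S: pairs (j, C) where C = {x, x + v_j} with x in <S>;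
   the tag j realises the disjoint union V_1 ⊔ ... ⊔ V_s *)
Definition GS_vertices (n s : nat) (v : 'I_s -> 'rV['F_2]_n)
  : {set 'I_s * {set 'rV['F_2]_n}} :=
  [set p | (p.2 \in [set [set x; x + v p.1] | x in spanS v])].

Definition GS_part (n s : nat) (v : 'I_s -> 'rV['F_2]_n) (j : 'I_s)
  : {set 'I_s * {set 'rV['F_2]_n}} :=
  [set p in GS_vertices v | p.1 == j].

Definition GS_adj (n s : nat) (p q : 'I_s * {set 'rV['F_2]_n}) : bool :=
  (p.1 != q.1) && (p.2 :&: q.2 != set0).

Definition GS_independent (n s : nat) (v : 'I_s -> 'rV['F_2]_n)
  (A : {set 'I_s * {set 'rV['F_2]_n}}) : Prop :=
  A \subset GS_vertices v /\
  forall p q, p \in A -> q \in A -> ~~ GS_adj p q.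

From mathcomp Require Import all_boot all_order all_algebra.
From mathcomp Require Import zify.

Set Implicit Arguments. Unset Strict Implicit.
Unset Printing Implicit Defensive.
Import GRing.Theory.

(* An independent set is obtained from a *packing*: a family of
   vertices of G_S whose underlying pairs {x, x + v_j} are pairwise disjoint
   subsets of <S>; two such vertices never intersect, so a packing is
   independent.  Packings are built greedily.  If the vertices already
   chosen cover a set C of points with 2|C| < |<S>|, then for every part j
   some x in <S> avoids both C and C - v_j, and the vertex {x, x + v_j} of
   V_j extends the packing.  Since every vertex covers at most two points,
   a packing with k vertices can always be extended as long as
   4k < |<S>|.  As |<S>| >= 2^(dim S), i.e. 4 * 2^(dim S - 2) <= |<S>|,
   any prescribed multiset of parts of total size 2^(dim S - 2) -- the part
   j occurring b_j times -- is realised by a packing. *)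

(* The row space of an F_2-matrix of rank r has at least 2^r vectors:
   coordinates in a row basis embed 'rV_r into it. *)
Lemma card_rowspace (m n : nat) (M : 'M['F_2]_(m, n)) :
  (2 ^ \rank M <= #|[set x : 'rV['F_2]_n | (x <= M)%MS]|)%N.
Proof.
have coord_inj : injective (fun u : 'rV_(\rank M) => (u *m row_base M)%R).
  exact: row_free_inj (row_base_free M).
have card_img :
    #|[set (u *m row_base M)%R | u : 'rV_(\rank M)]| = (2 ^ \rank M)%N.
  by rewrite card_imset // card_mx card_Fp // mul1n.
rewrite -card_img; apply/subset_leq_card/subsetP => _ /imsetP [u _ ->].
by rewrite inE (submx_trans (submxMl _ _)) // eq_row_base.
Qed.

Lemma card_bigcup_le {I T : finType} (P : {pred I}) (F : I -> {set T}) :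
  (#|\bigcup_(i in P) F i| <= \sum_(i in P) #|F i|)%N.
Proof.
elim/big_rec2: _ => [|i U k _ IH]; first by rewrite cards0.
exact: leq_trans (leq_card_setU _ _) (leq_add (leqnn _) IH).
Qed.

Section Packing.
Variables (n s : nat) (v : 'I_s -> 'rV['F_2]_n).

Local Notation vertex := ('I_s * {set 'rV['F_2]_n})%type.

Definition packing (A : {set vertex}) : Prop :=
  A \subset GS_vertices v /\
  {in A &, forall p q : vertex, p != q -> [disjoint p.2 & q.2]}.

Definition covered (A : {set vertex}) : {set 'rV['F_2]_n} :=
  \bigcup_(p in A) p.2.

Lemma packing_independent (A : {set vertex}) :
  packing A -> GS_independent v A.
Proof.
move=> [Asub Adisj]; split=> // p q pA qA; rewrite /GS_adj negb_and negbK.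
have [<-|pq] := eqVneq p q; first by rewrite eqxx.
by rewrite setI_eq0 (Adisj p q) ?orbT.
Qed.

Lemma card_vertex (p : vertex) : p \in GS_vertices v -> (#|p.2| <= 2)%N.
Proof. by rewrite inE => /imsetP [x _ ->]; rewrite cards2; case: (_ != _). Qed.

Lemma card_covered (A : {set vertex}) :
  A \subset GS_vertices v -> (#|covered A| <= 2 * #|A|)%N.
Proof.
move=> /subsetP Asub; rewrite /covered.
apply: leq_trans (card_bigcup_le _ _) _.
rewrite mulnC -sum_nat_const; apply: leq_sum => p pA.
exact: card_vertex (Asub p pA).
Qed.

Lemma fresh_vertex (C : {set 'rV['F_2]_n}) (j : 'I_s) :
  (2 * #|C| < #|spanS v|)%N ->
  exists2 p, p \in GS_part v j & [disjoint p.2 & C].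
Proof.
move=> smallC.
set bad := C :|: [set (y - v j)%R | y in C].
have small_bad : (#|bad| < #|spanS v|)%N.
  apply: leq_ltn_trans (leq_card_setU _ _) _.
  by rewrite (leq_ltn_trans _ smallC) // mul2n -addnn leq_add2l leq_imset_card.
have [x xS xbad] : exists2 x, x \in spanS v & x \notin bad.
  apply/exists_inP; apply: contraTT small_bad => /exists_inPn allbad.
  rewrite -leqNgt; apply/subset_leq_card/subsetP => y yS.
  by have := allbad y yS; rewrite negbK.
have xC : x \notin C by apply: contra xbad => xC; rewrite inE xC.
have xvC : (x + v j)%R \notin C.
  apply: contra xbad => xvC; rewrite inE; apply/orP; right.
  by apply/imsetP; exists (x + v j)%R; rewrite ?addrK.
exists (j, [set x; (x + v j)%R]).
  by rewrite !inE eqxx andbT; apply/imsetP; exists x.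
by rewrite /= disjoints_subset subUset !sub1set !inE xC xvC.
Qed.

Lemma packing_add (A : {set vertex}) (p : vertex) :
  packing A -> p \in GS_vertices v -> [disjoint p.2 & covered A] ->
  packing (p |: A) /\ p \notin A.
Proof.
move=> [Asub Adisj] pV /bigcup_disjointP pfree.
have pA : p \notin A.
  have [x xp] : exists x, x \in p.2.
    by move: pV; rewrite inE => /imsetP [x _ ->]; exists x; rewrite !inE eqxx.
  apply/negP => pA; have := pfree p pA; rewrite -setI_eq0 setIid => /eqP p0.
  by rewrite p0 inE in xp.
split=> //; split; first by rewrite subUset sub1set pV.
move=> q1 q2; rewrite !inE => /predU1P [->|q1A] /predU1P [->|q2A];
  rewrite ?eqxx // => q12.
- exact: pfree.
- by rewrite disjoint_sym; apply: pfree.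
- exact: Adisj.
Qed.

Lemma greedy_packing (js : seq 'I_s) :
  (4 * size js <= #|spanS v|)%N ->
  exists A, [/\ packing A, #|A| = size js &
                forall j, #|A :&: GS_part v j| = count_mem j js].
Proof.
elim: js => [|j js IH] /= bound.
  exists set0; split=> //; last by move=> j; rewrite set0I cards0.
  - by split=> [|p]; rewrite ?sub0set ?inE.
  - by rewrite cards0.
have [|A [Apack Acard Aparts]] := IH.
  by apply: leq_trans bound; rewrite leq_mul2l leqnSn orbT.
have [|p pj pfree] := @fresh_vertex (covered A) j.
  apply: leq_ltn_trans (leq_mul (leqnn 2) (card_covered Apack.1)) _.
  by rewrite Acard; apply: leq_trans bound; lia.
have pV : p \in GS_vertices v by move: pj; rewrite inE => /andP [].
have [Apack' pA] := packing_add Apack pV pfree.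
exists (p |: A); split=> //; first by rewrite cardsU1 pA Acard.
move=> k; rewrite setIUl -Aparts; have [<-|jk] := eqVneq j k.
  by rewrite (setIidPl _) ?sub1set // cardsU1 inE (negbTE pA) ?eqxx.
rewrite (_ : [set p] :&: _ = set0) ?set0U /= ?(negbTE jk) //.
apply/setP => q; rewrite !inE; apply/negbTE/negP => /andP [/eqP -> /andP [_]].
by move: pj; rewrite inE => /andP [_ /eqP ->]; rewrite (negbTE jk).
Qed.

End Packing.

Lemma multiplicity_seq (s : nat) (b : 'I_s -> nat) :
  exists js : seq 'I_s,
    size js = (\sum_(j < s) b j)%N /\ forall j, count_mem j js = b j.
Proof.
exists (flatten [seq nseq (b i) i | i <- enum 'I_s]); split.
  rewrite size_flatten sumnE /shape -map_comp big_map big_enum /=.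
  by apply: eq_bigr => i _; rewrite size_nseq.
move=> j; rewrite count_flatten sumnE -map_comp big_map big_enum /=.
rewrite (bigD1 j) //= count_nseq /= eqxx mul1n big1 ?addn0 // => i ij.
by rewrite count_nseq /= (negbTE ij).
Qed.

Theorem mainTheorem14 (n s : nat) (v : 'I_s -> 'rV['F_2]_n)
  (hs2 : (2 <= s)%N) (hsn : (s <= 2 ^ (n - 2))%N)
  (hinj : injective v) (hnz : forall j, v j != 0%R)
  (hdim : (2 <= dimS v)%N)
  (b : 'I_s -> nat) (hb : (\sum_(j < s) b j)%N = (2 ^ (dimS v - 2))%N) :
  exists A : {set 'I_s * {set 'rV['F_2]_n}},
    GS_independent v A /\ #|A| = (2 ^ (dimS v - 2))%N /\
    forall j : 'I_s, #|A :&: GS_part v j| = b j.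
Proof.
have [js [js_size js_count]] := multiplicity_seq b.
have room : (4 * size js <= #|spanS v|)%N.
  have -> : (4 * size js = 2 ^ dimS v)%N.
    by rewrite js_size hb -[in RHS](subnKC hdim) expnD.
  exact: card_rowspace.
have [A [Apack Acard Aparts]] := greedy_packing room.
exists A; split; first exact: packing_independent.
by split=> [|j]; rewrite ?Acard ?js_size ?hb // Aparts js_count.
Qed.
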